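(* Consider the system \[ x_{k+1} = x_k - \rho y_k + \hat g(y_k,w_k),\qquad y_{k+1} = (1-\beta)y_k + \hat h(y_{k-1},w_{k-1})\bigl(J(x_k)-J(x_{k-1})\bigr) \] with the setup described in the context. Then for every $k\ge1$, \[ \mathbb{E}[\tilde x_{k+1}]=\mathbb{E}[\tilde x_k]-\rho\,\mathbb{E}[y_k],\qquad \mathbb{E}[y_{k+1}]=(1-\beta)\mathbb{E}[y_k]+\mu\gamma\,\mathbb{E}[\tilde x_k]. \]
   Context: Setup. Parameters: $\rho>0$, $\beta\in(0,2)$, $\varepsilon>0$, $\omega>0$. The random variables $w_i$, $i\in\mathbb{N}\cup\{0\}$, are i.i.d., each taking the value $-\omega$ or $\omega$ with probability $1/2$. The functions $h,g:\mathbb{R}\to\mathbb{R}$ are odd, satisfy $\mathrm{sign}(g(w))=\mathrm{sign}(h(w))$ for all $w$, and $g(w)=h(w)=0$ if and only if $w=0$. Define $\hat h(y,w):=\frac{h(w)}{|y|+\varepsilon}$ and $\hat g(y,w):=(|y|+\varepsilon)g(w)$. The objective is $J(x)=J^*+\frac{\mu}{2}(x-x^* )^2$ with $\mu>0$, $x^*,J^*\in\mathbb{R}$. The initial data $x_0,y_0$ and the initialization $y_1$ (the $y$-update being applied for $k\ge1$) are deterministic. Notation: $\tilde x_k:=x_k-x^*$, $\gamma:=\mathbb{E}[h(w_k)g(w_k)]$. *)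

From mathcomp Require Import all_boot all_order all_algebra.
From mathcomp Require Import reals.
Set Implicit Arguments. Unset Strict Implicit. Unset Printing Implicit Defensive.
Import Order.TTheory GRing.Theory Num.Theory.
Local Open Scope ring_scope.

Section Defs.
Variable R : realType.

(* The noise realization determined by a sign pattern s on the first N
   indices: w_i = omega if s i, -omega otherwise (i < N); w_i = 0 for i >= N
   (irrelevant: only indices < N are ever used below). *)
Definition noise (omega : R) (N : nat) (s : {ffun 'I_N -> bool}) : nat -> R :=
  fun i => match (insub i : option 'I_N) with
           | Some j => if s j then omega else - omega
           | None => 0
           end.

(* Expectation of a functional F of the noise sequence (w_0, ..., w_{N-1}),
   w_i i.i.d. uniform on {-omega, omega}: uniform average over the 2^N
   sign patterns. *)
Definition Esign (omega : R) (N : nat) (F : (nat -> R) -> R) : R :=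
  (2 ^+ N)^-1 * \sum_(s : {ffun 'I_N -> bool}) F (@noise omega N s).

Definition gamma (omega : R) (h g : R -> R) : R :=
  Esign omega 1 (fun w => h (w 0%N) * g (w 0%N)).

Definition hhat (eps : R) (h : R -> R) (y w : R) : R := h w / (`|y| + eps).
Definition ghat (eps : R) (g : R -> R) (y w : R) : R := (`|y| + eps) * g w.

Definition Jq (Js mu xs : R) (x : R) : R := Js + mu / 2 * (x - xs) ^+ 2.

End Defs.

From mathcomp Require Import all_boot all_order all_algebra.
From mathcomp Require Import reals.
From mathcomp Require Import ring lra.
Set Implicit Arguments. Unset Strict Implicit. Unset Printing Implicit Defensive.
Import Order.TTheory GRing.Theory Num.Theory.
Local Open Scope ring_scope.

(* The iterates x_k and y_k are functions of w_0, ..., w_{k-1} only, so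
   flipping the sign of w_k is a measure-preserving involution fixing them.
   Hence E[f * phi(w_k)] = 0 for odd phi, while an even function of w_k is the
   constant psi(omega).  The x-update adds (|y_k| + eps) g(w_k), which is odd
   in w_k.  In the y-update write x_{k+1} - x* = a + c g(w_k) with
   a = x~_k - rho y_k and c = |y_k| + eps: then h(w_k) / c times
   J(x_{k+1}) - J(x_k) is mu a h(w_k) g(w_k) plus terms odd in w_k, and the
   former has mean mu gamma E[a] = mu gamma E[x~_{k+1}]. *)

Section SignAverage.
Variable R : realType.
Context {omega : R} {N : nat}.
Implicit Types (s : {ffun 'I_N -> bool}) (F G : (nat -> R) -> R).

Definition flip_sign (j : nat) s : {ffun 'I_N -> bool} :=
  [ffun i => (val i == j) (+) s i].

Lemma flip_signK j : involutive (flip_sign j).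
Proof. by move=> s; apply/ffunP => i; rewrite !ffunE addbA addbb. Qed.

Lemma noise_lt s i (ltiN : (i < N)%N) :
  noise omega s i = if s (Ordinal ltiN) then omega else - omega.
Proof. by rewrite /noise insubT. Qed.

Lemma noise_flip_sign_neq j s i :
  i != j -> noise omega (flip_sign j s) i = noise omega s i.
Proof.
move=> neq_ij; case: (ltnP i N) => [ltiN | leNi].
  by rewrite !(noise_lt _ ltiN) ffunE /= (negbTE neq_ij).
by rewrite /noise insubF // ltnNge leNi.
Qed.

Lemma noise_flip_sign j s :
  (j < N)%N -> noise omega (flip_sign j s) j = - noise omega s j.
Proof.
move=> ltjN; rewrite !(noise_lt _ ltjN) ffunE /= eqxx.
by case: (s _); rewrite ?opprK.
Qed.

Lemma eq_Esign F G : (forall w, F w = G w) -> Esign omega N F = Esign omega N G.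
Proof. by move=> eqFG; rewrite /Esign (eq_bigr _ (fun s _ => eqFG _)). Qed.

Lemma EsignD F G :
  Esign omega N (fun w => F w + G w) = Esign omega N F + Esign omega N G.
Proof. by rewrite /Esign big_split mulrDr. Qed.

Lemma EsignB F G :
  Esign omega N (fun w => F w - G w) = Esign omega N F - Esign omega N G.
Proof. by rewrite /Esign sumrB mulrBr. Qed.

Lemma EsignZ c F : Esign omega N (fun w => c * F w) = c * Esign omega N F.
Proof. by rewrite /Esign -mulr_sumr mulrCA. Qed.

Lemma Esign_cst c : Esign omega N (fun=> c) = c.
Proof.
rewrite /Esign sumr_const card_ffun card_bool card_ord -[c *+ _]mulr_natl natrX.
by rewrite mulKf // expf_neq0 // pnatr_eq0.
Qed.

Definition determined_by_prefix (n : nat) F :=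
  forall w w', (forall i, (i < n)%N -> w i = w' i) -> F w = F w'.

Lemma determined_by_prefixW m n F :
  (m <= n)%N -> determined_by_prefix m F -> determined_by_prefix n F.
Proof.
move=> le_mn detF w w' eqw; apply: detF => i lt_im.
by apply: eqw; apply: leq_trans le_mn.
Qed.

Lemma Esign_mul_odd_noise j F (phi : R -> R) :
  (j < N)%N -> determined_by_prefix j F -> (forall v, phi (- v) = - phi v) ->
  Esign omega N (fun w => F w * phi (w j)) = 0.
Proof.
move=> ltjN detF phi_odd; rewrite /Esign.
set S := \sum_s _; suff S_opp : S = - S by rewrite [S](_ : _ = 0) ?mulr0; lra.
rewrite {1}/S (reindex_inj (inv_inj (flip_signK j))) -sumrN.
apply: eq_bigr => s _; rewrite noise_flip_sign // phi_odd mulrN.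
congr (- (_ * _)); apply: detF => i lt_ij.
by rewrite noise_flip_sign_neq // ltn_eqF.
Qed.

Lemma Esign_mul_even_noise j F (psi : R -> R) :
  (j < N)%N -> psi (- omega) = psi omega ->
  Esign omega N (fun w => F w * psi (w j)) = Esign omega N F * psi omega.
Proof.
move=> ltjN psi_even; rewrite mulrC -EsignZ /Esign; congr (_ * _).
apply: eq_bigr => s _; rewrite noise_lt mulrC.
by case: (s _); rewrite ?psi_even.
Qed.

End SignAverage.

Lemma gammaE (R : realType) (omega : R) (h g : R -> R) :
  (forall v, h (- v) = - h v) -> (forall v, g (- v) = - g v) ->
  gamma omega h g = h omega * g omega.
Proof.
move=> h_odd g_odd; rewrite /gamma.
rewrite (eq_Esign (G := fun w => 1 * (h (w 0%N) * g (w 0%N)))); last first.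
  by move=> w; rewrite mul1r.
rewrite (Esign_mul_even_noise _ (psi := fun v => h v * g v)) //.
  by rewrite Esign_cst mul1r.
by rewrite h_odd g_odd mulrNN.
Qed.

Section Iterates.
Variable R : realType.
Variables (rho beta eps mu xs Js x0 y0 y1 : R) (h g : R -> R).
Variables x y : (nat -> R) -> nat -> R.
Hypothesis eps_gt0 : 0 < eps.
Hypothesis x_0 : forall w, x w 0%N = x0.
Hypothesis y_0 : forall w, y w 0%N = y0.
Hypothesis y_1 : forall w, y w 1%N = y1.
Hypothesis x_S : forall w k,
  x w k.+1 = x w k - rho * y w k + ghat eps g (y w k) (w k).
Hypothesis y_S : forall w k, (1 <= k)%N ->
  y w k.+1 = (1 - beta) * y w k
             + hhat eps h (y w k.-1) (w k.-1)
               * (Jq Js mu xs (x w k) - Jq Js mu xs (x w k.-1)).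

Lemma iterates_determined_by_prefix n :
  [/\ determined_by_prefix n (x^~ n), determined_by_prefix n (y^~ n)
    & determined_by_prefix n (y^~ n.+1)].
Proof.
elim: n => [|n [det_xn det_yn det_ySn]].
  by split=> w w' _; rewrite ?x_0 ?y_0 ?y_1.
have det_xSn : determined_by_prefix n.+1 (x^~ n.+1).
  move=> w w' eqw; rewrite !x_S /ghat (eqw n) //.
  by rewrite (det_xn w w') ?(det_yn w w') // => i lt_in; apply/eqw/ltnW.
split=> //; first exact: determined_by_prefixW det_ySn.
move=> w w' eqw; have eqw' i : (i < n)%N -> w i = w' i by move/ltnW/eqw.
rewrite (y_S w) // (y_S w') //= (det_xSn w w') // (det_xn w w') //.
by rewrite (det_yn w w') // (det_ySn w w') // eqw.
Qed.

Let drift w k := x w k - xs - rho * y w k.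
Let scale w k := `|y w k| + eps.

Lemma scale_neq0 w k : scale w k != 0.
Proof. by rewrite /scale lt0r_neq0 // ltr_wpDl. Qed.

Lemma x_S_centered w k : x w k.+1 - xs = drift w k + scale w k * g (w k).
Proof. by rewrite x_S /ghat /drift /scale; ring. Qed.

Lemma y_SS_expand w j :
  y w j.+2 = (1 - beta) * y w j.+1
             + mu * drift w j * (h (w j) * g (w j))
             + mu * (drift w j ^+ 2 - (x w j - xs) ^+ 2) / (2 * scale w j)
               * h (w j)
             + mu * scale w j / 2 * (g (w j) ^+ 2 * h (w j)).
Proof.
move: (scale_neq0 w j); rewrite y_S //= /hhat /Jq x_S_centered /scale.
by move=> nz_scale; field.
Qed.

Hypothesis h_odd : forall v, h (- v) = - h v.
Hypothesis g_odd : forall v, g (- v) = - g v.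
Context {omega : R} {N : nat}.

Lemma Esign_x_S_drift k : (k < N)%N ->
  Esign omega N (fun w => x w k.+1 - xs) = Esign omega N (drift^~ k).
Proof.
move=> ltkN; have [_ det_yk _] := iterates_determined_by_prefix k.
rewrite (eq_Esign (x_S_centered ^~ k)) EsignD.
rewrite Esign_mul_odd_noise ?addr0 // => w w' eqw.
by rewrite /scale (det_yk w w').
Qed.

Lemma Esign_x_S k : (k < N)%N ->
  Esign omega N (fun w => x w k.+1 - xs)
  = Esign omega N (fun w => x w k - xs) - rho * Esign omega N (y^~ k).
Proof. by move=> ltkN; rewrite Esign_x_S_drift // /drift EsignB EsignZ. Qed.

Lemma Esign_y_SS j : (j.+1 < N)%N ->
  Esign omega N (y^~ j.+2)
  = (1 - beta) * Esign omega N (y^~ j.+1)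
    + mu * gamma omega h g * Esign omega N (fun w => x w j.+1 - xs).
Proof.
move=> ltSjN; have ltjN := ltnW ltSjN.
have [det_xj det_yj _] := iterates_determined_by_prefix j.
rewrite (eq_Esign (y_SS_expand ^~ j)) ![in LHS]EsignD.
rewrite (Esign_mul_even_noise _ (psi := fun v => h v * g v) ltjN); last first.
  by rewrite /= h_odd g_odd mulrNN.
have det_drift_term : determined_by_prefix j (fun w =>
    mu * (drift w j ^+ 2 - (x w j - xs) ^+ 2) / (2 * scale w j)).
  by move=> w w' eqw; rewrite /drift /scale (det_xj w w') ?(det_yj w w').
have det_scale_term : determined_by_prefix j (fun w => mu * scale w j / 2).
  by move=> w w' eqw; rewrite /scale (det_yj w w').
have g2h_odd v : g (- v) ^+ 2 * h (- v) = - (g v ^+ 2 * h v).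
  by rewrite g_odd h_odd sqrrN mulrN.
rewrite (Esign_mul_odd_noise ltjN det_drift_term h_odd).
rewrite (Esign_mul_odd_noise ltjN det_scale_term g2h_odd).
by rewrite !EsignZ Esign_x_S_drift // gammaE //; ring.
Qed.

End Iterates.

Theorem lemma5 (R : realType) (rho beta eps omega mu xs Js : R)
  (h g : R -> R) (x0 y0 y1 : R) (x y : (nat -> R) -> nat -> R) :
  0 < rho -> 0 < beta -> beta < 2 -> 0 < eps -> 0 < omega -> 0 < mu ->
  (forall v, h (- v) = - h v) -> (forall v, g (- v) = - g v) ->
  (forall v, Num.sg (g v) = Num.sg (h v)) ->
  (forall v, g v = 0 <-> v = 0) -> (forall v, h v = 0 <-> v = 0) ->
  (forall w, x w 0%N = x0) -> (forall w, y w 0%N = y0) ->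
  (forall w, y w 1%N = y1) ->
  (forall w k, x w k.+1 = x w k - rho * y w k + ghat eps g (y w k) (w k)) ->
  (forall w k, (1 <= k)%N ->
     y w k.+1 = (1 - beta) * y w k
                + hhat eps h (y w k.-1) (w k.-1)
                  * (Jq Js mu xs (x w k) - Jq Js mu xs (x w k.-1))) ->
  forall k N : nat, (1 <= k)%N -> (k < N)%N ->
    Esign omega N (fun w => x w k.+1 - xs)
      = Esign omega N (fun w => x w k - xs) - rho * Esign omega N (fun w => y w k)
    /\
    Esign omega N (fun w => y w k.+1)
      = (1 - beta) * Esign omega N (fun w => y w k)
        + mu * gamma omega h g * Esign omega N (fun w => x w k - xs).
Proof.
move=> _ _ _ eps_gt0 _ _ h_odd g_odd _ _ _ x_0 y_0 y_1 x_S y_S [//|j] N _ ltSjN.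
split; first exact: (Esign_x_S x_0 y_0 y_1 x_S y_S g_odd ltSjN).
exact: (Esign_y_SS eps_gt0 x_0 y_0 y_1 x_S y_S h_odd g_odd ltSjN).
Qed.
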